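(* Let $n\ge3$, $1<k<n/2$, $p>\frac{nk}{n-2k}$, and let $u$ be a regular solution of (1.6). If $u(r)=O(r^{-\frac{2k}{p-k}-\varepsilon})$ as $r\to\infty$ for some $\varepsilon\in\big(0,\frac{n-2k}{k}-\frac{2k}{p-k}\big)$, then $u(r)=O(r^{\frac{2k-n}{k}})$ as $r\to\infty$.
   Context: Problem (1.6) is: given $\rho>0$, find $u$ with $-\tfrac{1}{k}C_{n-1}^{k-1}(r^{n-k}|u'|^{k-1}u')'=r^{n-1}u^{p}$, $u(r)>0$ for all $r>0$, $u'(0)=0$, $u(0)=\rho$, where $C_{n-1}^{k-1}$ is the binomial coefficient. A solution $u$ of (1.6) is regular if $x\mapsto u(|x|)$ belongs to $C^2(\mathbb{R}^n)$. *)

From Stdlib Require Import Reals Lra Lia.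
Open Scope R_scope.

(* Points of R^n are represented as x : nat -> R, of which only the
   coordinates 0 .. n-1 are used. *)
Fixpoint sumsq (n : nat) (x : nat -> R) : R :=
  match n with
  | O => 0
  | S m => sumsq m x + (x m) ^ 2
  end.

Definition vnorm (n : nat) (x : nat -> R) : R := sqrt (sumsq n x).

Definition upd (x : nat -> R) (i : nat) (t : R) : nat -> R :=
  fun j => if Nat.eqb j i then t else x j.

Definition has_partial (f : (nat -> R) -> R) (i : nat) (x : nat -> R) (l : R) : Prop :=
  derivable_pt_lim (fun t => f (upd x i t)) (x i) l.

Definition cont_Rn (n : nat) (g : (nat -> R) -> R) : Prop :=
  forall x eps, 0 < eps -> exists delta, 0 < delta /\
    forall y, vnorm n (fun j => y j - x j) < delta -> Rabs (g y - g x) < eps.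

Definition C2_Rn (n : nat) (f : (nat -> R) -> R) : Prop :=
  cont_Rn n f /\
  exists (D : nat -> (nat -> R) -> R) (D2 : nat -> nat -> (nat -> R) -> R),
    forall i j, (i < n)%nat -> (j < n)%nat ->
      (forall x, has_partial f i x (D i x)) /\
      (forall x, has_partial (D i) j x (D2 i j x)) /\
      cont_Rn n (D i) /\ cont_Rn n (D2 i j).

(* u solves problem (1.6) with parameters n, k, p and initial value rho:
   -(1/k) C_{n-1}^{k-1} (r^{n-k} |u'|^{k-1} u')' = r^{n-1} u^p  for r > 0,
   u(r) > 0 for r > 0, u'(0) = 0 (right derivative), u(0) = rho. *)
Definition solves_1_6 (n k : nat) (p rho : R) (u : R -> R) : Prop :=
  (forall r, 0 < r -> 0 < u r) /\
  u 0 = rho /\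
  (forall eps, 0 < eps -> exists delta, 0 < delta /\
     forall h, 0 < h < delta -> Rabs ((u h - u 0) / h) < eps) /\
  exists du : R -> R,
    (forall r, 0 < r -> derivable_pt_lim u r (du r)) /\
    (forall r, 0 < r -> exists l,
       derivable_pt_lim (fun s => s ^ (n - k) * (Rabs (du s)) ^ (k - 1) * du s) r l /\
       - (1 / INR k) * C (n - 1) (k - 1) * l = r ^ (n - 1) * Rpower (u r) p).

Definition regular_solution (n k : nat) (p rho : R) (u : R -> R) : Prop :=
  solves_1_6 n k p rho u /\ C2_Rn n (fun x => u (vnorm n x)).

Definition bigO_infty (f : R -> R) (a : R) : Prop :=
  exists M R0, forall r, R0 < r -> Rabs (f r) <= M * Rpower r a.

From Stdlib Require Import Reals Lra Lia.
Open Scope R_scope.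

(** Bootstrap on the decay exponent.  With W = r^(n-k) |u'|^(k-1) u' the
    equation reads W' = -c r^(n-1) u^p, c > 0.  If u <= M r^b with b < 0, then
    integrating W' gives |W| = O(r^max(n+pb,0)), hence |u'| = O(r^(d-1)) with
    d = (max(n+pb,0) - n + 2k)/k, and integrating u' from infinity, where u
    tends to 0, gives u = O(r^d).  While n + pb > 0 this step is
    b |-> (pb+2k)/k, which pushes any b below its fixed point -2k/(p-k) down
    by a fixed amount; after finitely many steps n + pb <= 0, and then at most
    two more steps give the exponent (2k-n)/k. *)

Lemma Rpower_pos x y : 0 < Rpower x y.
Proof. unfold Rpower; apply exp_pos. Qed.

Lemma Rpower_ge1 r e : 1 <= r -> 0 <= e -> 1 <= Rpower r e.
Proof. intros. rewrite <- (Rpower_O r) by lra. apply Rle_Rpower; lra. Qed.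

Lemma nondecreasing_of_derive_nonneg (f f' : R -> R) a :
  (forall x, a <= x -> derivable_pt_lim f x (f' x)) ->
  (forall x, a <= x -> 0 <= f' x) ->
  forall x y, a <= x -> x <= y -> f x <= f y.
Proof.
  intros Hd Hpos x y Hx Hxy.
  destruct (Req_dec x y) as [->|Hne]; [lra|].
  destruct (MVT_cor2 f f' x y) as [z [Hmvt Hz]]; [lra| intros z Hz; apply Hd; lra|].
  assert (0 <= f' z * (y - x)) by (apply Rmult_le_pos; [apply Hpos|]; lra).
  lra.
Qed.

Lemma Rpower_neg_eventually_lt (M b eta r : R) :
  0 < M -> b < 0 -> 0 < eta -> 0 < r ->
  exists s, r <= s /\ M * Rpower s b < eta.
Proof.
  intros HM Hb Heta Hr.
  set (T := Rmax (ln r) (ln (eta / M) / b) + 1).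
  assert (HT1 : ln r < T) by (unfold T; pose proof (Rmax_l (ln r) (ln (eta / M) / b)); lra).
  assert (HT2 : ln (eta / M) / b < T)
    by (unfold T; pose proof (Rmax_r (ln r) (ln (eta / M) / b)); lra).
  exists (exp T); split.
  - rewrite <- (exp_ln r) at 1 by lra. apply Rlt_le, exp_increasing; lra.
  - unfold Rpower; rewrite ln_exp.
    assert (HbT : b * T < ln (eta / M)).
    { replace (ln (eta / M)) with (b * (ln (eta / M) / b)) by (field; lra).
      apply Rmult_lt_gt_compat_neg_l; lra. }
    assert (Hexp : exp (b * T) < eta / M).
    { rewrite <- (exp_ln (eta / M)) by (apply Rdiv_lt_0_compat; lra).
      apply exp_increasing; lra. }
    apply (Rmult_lt_compat_l M) in Hexp; [|lra].
    replace (M * (eta / M)) with eta in Hexp by (field; lra). lra.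
Qed.

Lemma le_Rpower_inv_of_pow_le (x y : R) (m : nat) :
  (0 < m)%nat -> 0 <= x -> x ^ m <= y -> x <= Rpower y (/ INR m).
Proof.
  intros Hm Hx Hxy.
  destruct (Req_dec x 0) as [->|Hx0]; [apply Rlt_le, Rpower_pos|].
  assert (Hm' : 0 < INR m) by (apply lt_0_INR; lia).
  assert (Hxm : 0 < x ^ m) by (apply pow_lt; lra).
  replace x with (Rpower (x ^ m) (/ INR m)) at 1.
  - apply Rle_Rpower_l; [apply Rlt_le, Rinv_0_lt_compat|]; lra.
  - rewrite <- Rpower_pow, Rpower_mult by lra.
    rewrite Rinv_r, Rpower_1 by lra. reflexivity.
Qed.

(* W + (C/e) r^e is nondecreasing, which bounds W from below by a multiple
   of r^e when e > 0 and by a constant when e < 0. *)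
Lemma bound_of_derive_between (W W' : R -> R) (C e R0 : R) :
  1 <= R0 -> 0 < C -> e <> 0 ->
  (forall x, R0 <= x -> derivable_pt_lim W x (W' x)) ->
  (forall x, R0 <= x -> - (C * Rpower x (e - 1)) <= W' x <= 0) ->
  exists K, 0 < K /\ forall r, R0 <= r -> Rabs (W r) <= K * Rpower r (Rmax e 0).
Proof.
  intros HR0 HC He HW HW'.
  assert (W_le : forall r, R0 <= r -> W r <= W R0).
  { intros r Hr.
    enough (- W R0 <= - W r) by lra.
    apply (nondecreasing_of_derive_nonneg (fun s => - W s) (fun s => - W' s) R0); try lra.
    - intros x Hx. apply (derivable_pt_lim_opp W), HW; lra.
    - intros x Hx. pose proof (HW' x Hx); lra. }
  set (G := fun s => W s + C / e * Rpower s e).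
  assert (G_ge : forall r, R0 <= r -> G R0 <= G r).
  { intros r Hr.
    apply (nondecreasing_of_derive_nonneg G
             (fun s => W' s + C / e * (e * Rpower s (e - 1))) R0); try lra.
    - intros x Hx. apply (derivable_pt_lim_plus W), (derivable_pt_lim_scal (fun s => Rpower s e));
        [apply HW | apply derivable_pt_lim_power]; lra.
    - intros x Hx.
      replace (C / e * (e * Rpower x (e - 1))) with (C * Rpower x (e - 1)) by (field; auto).
      pose proof (HW' x Hx); lra. }
  exists (Rabs (W R0) + Rabs (G R0) + C / Rabs e + 1).
  assert (HCe : 0 < C / Rabs e) by (apply Rdiv_lt_0_compat; [|apply Rabs_pos_lt]; auto).
  pose proof (Rle_abs (W R0)). pose proof (Rle_abs (- G R0)). rewrite Rabs_Ropp in *.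
  pose proof (Rabs_pos (W R0)). pose proof (Rabs_pos (G R0)).
  split; [lra|]. intros r Hr.
  pose proof (W_le r Hr). pose proof (G_ge r Hr). unfold G in *.
  pose proof (Rpower_pos r e).
  destruct (Rle_or_lt e 0) as [He0|He0].
  - rewrite Rmax_right, Rpower_O by lra.
    assert (C / e * Rpower r e < 0).
    { assert (/ e < 0) by (apply Rinv_lt_0_compat; lra).
      assert (C * / e < 0) by nra.
      unfold Rdiv. nra. }
    apply Rabs_le; lra.
  - rewrite Rmax_left by lra. rewrite (Rabs_pos_eq e) in HCe |- * by lra.
    pose proof (Rpower_ge1 r e ltac:(lra) ltac:(lra)).
    assert (0 <= C / e * Rpower r e) by (apply Rmult_le_pos; lra).
    apply Rabs_le; split; nra.
Qed.

Lemma decay_of_derivative_bound (f f' : R -> R) (K d R0 : R) :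
  0 < R0 -> 0 <= K -> d < 0 ->
  (forall x, R0 <= x -> derivable_pt_lim f x (f' x)) ->
  (forall x, R0 <= x -> - (K * Rpower x (d - 1)) <= f' x) ->
  (forall eta r, 0 < eta -> exists s, r <= s /\ f s < eta) ->
  forall r, R0 <= r -> f r <= - (K / d) * Rpower r d.
Proof.
  intros HR0 HK Hd Hf Hf' Hsmall r Hr.
  set (h := fun s => f s + K / d * Rpower s d).
  assert (h_incr : forall x y, R0 <= x -> x <= y -> h x <= h y).
  { apply (nondecreasing_of_derive_nonneg h
             (fun s => f' s + K / d * (d * Rpower s (d - 1))) R0).
    - intros x Hx. apply (derivable_pt_lim_plus f), (derivable_pt_lim_scal (fun s => Rpower s d));
        [apply Hf | apply derivable_pt_lim_power]; lra.
    - intros x Hx.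
      replace (K / d * (d * Rpower x (d - 1))) with (K * Rpower x (d - 1)) by (field; lra).
      pose proof (Hf' x Hx); lra. }
  destruct (Rle_or_lt (h r) 0) as [Hh|Hh]; [unfold h in Hh; lra|].
  destruct (Hsmall (h r) r Hh) as [s [Hs Hfs]].
  pose proof (h_incr r s Hr Hs). unfold h in *.
  pose proof (Rpower_pos s d).
  assert (/ d < 0) by (apply Rinv_lt_0_compat; lra).
  assert (K / d * Rpower s d <= 0).
  { assert (K / d <= 0) by (unfold Rdiv; nra). nra. }
  lra.
Qed.

Definition flux (n k : nat) (du : R -> R) (s : R) : R :=
  s ^ (n - k) * Rabs (du s) ^ (k - 1) * du s.

Section Bootstrap.

Variables (n k : nat) (p c : R) (u du : R -> R).
Hypotheses (k_ge1 : (1 <= k)%nat) (k_le_n : (k <= n)%nat) (p_gt0 : 0 < p) (c_gt0 : 0 < c).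
Hypothesis u_pos : forall r, 0 < r -> 0 < u r.
Hypothesis u_deriv : forall r, 0 < r -> derivable_pt_lim u r (du r).
Hypothesis flux_deriv : forall r, 0 < r ->
  derivable_pt_lim (flux n k du) r (- c * (r ^ (n - 1) * Rpower (u r) p)).

Definition decays_like (b : R) : Prop :=
  exists M R0, 1 <= R0 /\ 0 < M /\ forall r, R0 <= r -> u r <= M * Rpower r b.

Lemma decays_like_le b b' : decays_like b -> b <= b' -> decays_like b'.
Proof.
  intros [M [R0 [HR0 [HM Hu]]]] Hb. exists M, R0. split; [|split]; auto.
  intros r Hr. pose proof (Hu r Hr).
  pose proof (Rle_Rpower r b b' ltac:(lra) Hb). nra.
Qed.

Lemma decays_like_of_bigO_infty b : bigO_infty u b -> decays_like b.
Proof.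
  intros [M [R0 Hu]].
  set (R1 := Rmax 1 (R0 + 1)).
  assert (HR1 : 1 <= R1) by apply Rmax_l.
  assert (HR01 : R0 + 1 <= R1) by apply Rmax_r.
  assert (Hu' : forall r, R1 <= r -> u r <= M * Rpower r b).
  { intros r Hr. pose proof (Hu r ltac:(lra)) as Hur.
    rewrite Rabs_pos_eq in Hur by (apply Rlt_le, u_pos; lra). exact Hur. }
  exists M, R1. split; [exact HR1|split; [|exact Hu']].
  pose proof (Hu' R1 (Rle_refl _)). pose proof (u_pos R1 ltac:(lra)).
  pose proof (Rpower_pos R1 b). nra.
Qed.

Lemma bigO_infty_of_decays_like b : decays_like b -> bigO_infty u b.
Proof.
  intros [M [R0 [HR0 [HM Hu]]]]. exists M, R0. intros r Hr.
  rewrite Rabs_pos_eq by (apply Rlt_le, u_pos; lra). apply Hu; lra.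
Qed.

Lemma Rabs_flux r : 0 < r -> Rabs (flux n k du r) = r ^ (n - k) * Rabs (du r) ^ k.
Proof.
  intros Hr. unfold flux.
  rewrite !Rabs_mult, <- !RPow_abs, Rabs_pos_eq, Rabs_Rabsolu by lra.
  rewrite Rmult_assoc. f_equal.
  rewrite <- (pow_1 (Rabs (du r))) at 2.
  rewrite <- pow_add, Nat.sub_add by lia. reflexivity.
Qed.

Lemma source_le (M b R0 : R) :
  1 <= R0 -> (forall r, R0 <= r -> u r <= M * Rpower r b) ->
  forall r, R0 <= r ->
    r ^ (n - 1) * Rpower (u r) p <= Rpower M p * Rpower r (INR n + p * b - 1).
Proof.
  intros HR0 Hu r Hr.
  assert (Hur : 0 < u r) by (apply u_pos; lra).
  assert (HM : 0 < M * Rpower r b) by (pose proof (Hu r Hr); lra).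
  assert (Hupow : Rpower (u r) p <= Rpower M p * Rpower r (b * p)).
  { assert (HM0 : 0 < M) by (pose proof (Rpower_pos r b); nra).
    rewrite <- Rpower_mult, Rpower_mult_distr by (auto; apply Rpower_pos).
    apply Rle_Rpower_l; [lra|]. split; [lra|]. apply Hu; lra. }
  rewrite <- (Rpower_pow (n - 1) r), minus_INR by (lra || lia).
  replace (INR n + p * b - 1) with ((INR n - INR 1) + b * p) by (simpl; ring).
  rewrite Rpower_plus.
  pose proof (Rpower_pos r (INR n - INR 1)). nra.
Qed.

Lemma decay_step b d :
  decays_like b -> b < 0 -> INR n + p * b <> 0 ->
  d = (Rmax (INR n + p * b) 0 - INR n + 2 * INR k) / INR k -> d < 0 ->
  decays_like d.
Proof.
  intros [M [R0 [HR0 [HM Hu]]]] Hb He Hd Hd0.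
  assert (Hk : 0 < INR k) by (apply lt_0_INR; lia).
  set (E := Rmax (INR n + p * b) 0) in Hd.
  destruct (bound_of_derive_between (flux n k du)
              (fun x => - c * (x ^ (n - 1) * Rpower (u x) p))
              (c * Rpower M p) (INR n + p * b) R0) as [K [HK Hflux]]; auto.
  { pose proof (Rpower_pos M p). nra. }
  { intros x Hx. apply flux_deriv; lra. }
  { intros x Hx. pose proof (source_le M b R0 HR0 Hu x Hx).
    assert (0 <= x ^ (n - 1) * Rpower (u x) p).
    { apply Rmult_le_pos; [apply pow_le | apply Rlt_le, Rpower_pos]; lra. }
    split; nra. }
  set (K' := Rpower K (/ INR k)).
  assert (Hdu : forall r, R0 <= r -> Rabs (du r) <= K' * Rpower r (d - 1)).
  { intros r Hr.
    replace (K' * Rpower r (d - 1))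
      with (Rpower (K * Rpower r (E - INR n + INR k)) (/ INR k)).
    2:{ unfold K'. rewrite <- Rpower_mult_distr, Rpower_mult by (auto; apply Rpower_pos).
        do 2 f_equal. rewrite Hd. field. lra. }
    apply le_Rpower_inv_of_pow_le; [lia | apply Rabs_pos |].
    pose proof (Hflux r Hr) as Hr'. rewrite Rabs_flux in Hr' by lra.
    replace (Rmax (INR n + p * b) 0) with ((INR n - INR k) + (E - INR n + INR k)) in Hr'
      by (unfold E; ring).
    rewrite Rpower_plus, <- minus_INR, Rpower_pow in Hr' by (lia || lra).
    pose proof (pow_lt r (n - k) ltac:(lra)).
    pose proof (Rpower_pos r (E - INR n + INR k)). nra. }
  assert (HK' : 0 < K') by apply Rpower_pos.
  exists (- (K' / d)), R0. split; [lra|split].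
  { assert (/ d < 0) by (apply Rinv_lt_0_compat; lra). unfold Rdiv. nra. }
  apply (decay_of_derivative_bound u du K' d R0); try lra.
  - intros x Hx. apply u_deriv; lra.
  - intros x Hx. pose proof (Hdu x Hx). pose proof (Rle_abs (- du x)).
    rewrite Rabs_Ropp in *. lra.
  - intros eta r Heta.
    destruct (Rpower_neg_eventually_lt M b eta (Rmax r R0) HM Hb Heta)
      as [s [Hs Hsmall]]; [pose proof (Rmax_r r R0); lra|].
    pose proof (Rmax_l r R0). pose proof (Rmax_r r R0).
    exists s. split; [lra|]. pose proof (Hu s ltac:(lra)). lra.
Qed.

Hypothesis p_supercritical : INR n * INR k < p * (INR n - 2 * INR k).

Let k_pos : 0 < INR k.
Proof. apply lt_0_INR; lia. Qed.

Let n_gt_2k : 0 < INR n - 2 * INR k.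
Proof.
  assert (0 < INR n * INR k) by (apply Rmult_lt_0_compat; [apply lt_0_INR; lia | exact k_pos]).
  nra.
Qed.

Let k_lt_p : INR k < p.
Proof. pose proof n_gt_2k. pose proof k_pos. nra. Qed.

(* Once n + pb <= 0, raise b slightly so that n + pb > 0 is small: one step
   then lands at an exponent d with n + pd < 0, and a second step reaches
   (2k - n)/k. *)
Lemma decays_critical_of_fast_decay b :
  decays_like b -> INR n + p * b <= 0 -> decays_like ((2 * INR k - INR n) / INR k).
Proof.
  intros Hb Hnb.
  pose proof k_pos. pose proof n_gt_2k.
  set (Q := p * (INR n - 2 * INR k) - INR n * INR k).
  set (X := Rmin (INR n - 2 * INR k) (Q / p)).
  assert (HX : 0 < X).
  { apply Rmin_glb_lt; [lra | apply Rdiv_lt_0_compat; unfold Q; lra]. }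
  assert (HX1 : X <= INR n - 2 * INR k) by apply Rmin_l.
  assert (HX2 : p * X <= Q).
  { pose proof (Rmin_r (INR n - 2 * INR k) (Q / p)) as HXQ. fold X in HXQ.
    apply (Rmult_le_compat_l p) in HXQ; [|lra].
    replace (p * (Q / p)) with Q in HXQ by (field; lra). lra. }
  set (b1 := (X / 2 - INR n) / p).
  assert (Hb1 : p * b1 = X / 2 - INR n) by (unfold b1; field; lra).
  set (d1 := (X / 2 - INR n + 2 * INR k) / INR k).
  assert (Hd1 : INR k * d1 = X / 2 - INR n + 2 * INR k) by (unfold d1; field; lra).
  assert (Hdecay1 : decays_like d1).
  { apply (decay_step b1); [apply (decays_like_le b); [exact Hb | nra] | nra | lra | | nra].
    rewrite Hb1, Rmax_left by lra. unfold d1. f_equal. ring. }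
  assert (Hsource : INR n + p * d1 < 0).
  { enough (INR k * (INR n + p * d1) < 0) by nra.
    replace (INR k * (INR n + p * d1)) with (INR n * INR k + p * (INR k * d1)) by ring.
    rewrite Hd1. unfold Q in HX2. nra. }
  apply (decay_step d1); [exact Hdecay1 | nra | lra | | ].
  - rewrite Rmax_right by lra. f_equal. ring.
  - assert (0 < / INR k) by (apply Rinv_0_lt_compat; lra). unfold Rdiv. nra.
Qed.

(* The step map b |-> (pb + 2k)/k has fixed point -2k/(p-k) and slope
   p/k > 1, so below the fixed point by eps it lowers b by at least
   (p-k) eps / k. *)
Lemma decays_critical_of_below_fixed_point eps N b :
  0 < eps -> b <= - (2 * INR k / (p - INR k)) - eps ->
  b + INR n / p <= INR N * ((p - INR k) * eps / INR k) ->
  decays_like b -> decays_like ((2 * INR k - INR n) / INR k).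
Proof.
  pose proof k_pos. pose proof k_lt_p.
  set (g := (p - INR k) * eps / INR k).
  intros Heps. assert (Hg : 0 < g) by (apply Rdiv_lt_0_compat; nra).
  revert b; induction N as [|N IH]; intros b Hb HbN Hdecay.
  - apply (decays_critical_of_fast_decay b Hdecay).
    simpl in HbN. apply (Rmult_le_compat_l p) in HbN; [|lra].
    replace (p * (b + INR n / p)) with (INR n + p * b) in HbN by (field; lra). lra.
  - destruct (Rle_or_lt (INR n + p * b) 0) as [Hfast|Hslow].
    { exact (decays_critical_of_fast_decay b Hdecay Hfast). }
    set (d := (p * b + 2 * INR k) / INR k).
    assert (Hdrop : d <= b - g).
    { enough (INR k * (d - b + g) <= 0) by nra.
      replace (INR k * (d - b + g))
        with ((p - INR k) * (b - (- (2 * INR k / (p - INR k)) - eps)))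
        by (unfold d, g; field; lra).
      nra. }
    assert (Hbneg : b < 0).
    { assert (0 < 2 * INR k / (p - INR k)) by (apply Rdiv_lt_0_compat; lra). lra. }
    apply (IH d); [lra | rewrite S_INR in HbN; lra |].
    apply (decay_step b); [exact Hdecay | exact Hbneg | lra | | lra].
    rewrite Rmax_left by lra. unfold d. f_equal. ring.
Qed.

Lemma decays_critical eps :
  0 < eps -> decays_like (- (2 * INR k / (p - INR k)) - eps) ->
  decays_like ((2 * INR k - INR n) / INR k).
Proof.
  intros Heps Hdecay. pose proof k_pos. pose proof k_lt_p.
  assert (Hg : (p - INR k) * eps / INR k > 0) by (apply Rdiv_lt_0_compat; nra).
  destruct (INR_archimed _ (- (2 * INR k / (p - INR k)) - eps + INR n / p) Hg) as [N HN].
  apply (decays_critical_of_below_fixed_point eps N (- (2 * INR k / (p - INR k)) - eps) Heps);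
    [lra | lra | exact Hdecay].
Qed.

End Bootstrap.

Theorem lemma2p2 (n k : nat) (p rho eps : R) (u : R -> R) :
  (3 <= n)%nat -> (1 < k)%nat -> INR k < INR n / 2 ->
  p > INR n * INR k / (INR n - 2 * INR k) ->
  0 < rho ->
  regular_solution n k p rho u ->
  0 < eps -> eps < (INR n - 2 * INR k) / INR k - 2 * INR k / (p - INR k) ->
  bigO_infty u (- (2 * INR k / (p - INR k)) - eps) ->
  bigO_infty u ((2 * INR k - INR n) / INR k).
Proof.
  intros _ Hk Hkn2 Hp _ [[Hpos [_ [_ [du [Hdu Hflux]]]]] _] Heps _ Hdecay.
  assert (Hk1 : 1 < INR k) by (apply lt_1_INR; lia).
  assert (Hkn : (k <= n)%nat) by (apply INR_le; lra).
  assert (Hsuper : INR n * INR k < p * (INR n - 2 * INR k)).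
  { apply (Rmult_lt_compat_r (INR n - 2 * INR k)) in Hp; [|lra].
    replace (INR n * INR k / (INR n - 2 * INR k) * (INR n - 2 * INR k))
      with (INR n * INR k) in Hp by (field; lra). lra. }
  assert (HC : 0 < C (n - 1) (k - 1)).
  { apply Rdiv_lt_0_compat; [|apply Rmult_lt_0_compat]; apply INR_fact_lt_0. }
  set (c := INR k / C (n - 1) (k - 1)).
  apply (bigO_infty_of_decays_like u Hpos).
  assert (Hp0 : 0 < p) by (assert (0 < INR n * INR k) by nra; nra).
  apply (decays_critical n k p c u du ltac:(lia) Hkn Hp0) with eps; auto.
  - apply Rdiv_lt_0_compat; lra.
  - intros r Hr. destruct (Hflux r Hr) as [l [Hl Heq]].
    replace (- c * (r ^ (n - 1) * Rpower (u r) p)) with l; [exact Hl|].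
    rewrite <- Heq. unfold c. field. lra.
  - exact (decays_like_of_bigO_infty u Hpos _ Hdecay).
Qed.
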